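(* Let $f_1,\dots,f_m\in\mathbb{R}[x_1,\dots,x_n]$ and $\sigma=(\sigma_1,\dots,\sigma_m)\in\{\le,<,=,>,\ge\}^m$, and set $E_\sigma=\{i:\sigma_i\text{ is }``=''\}$. Then for every connected component $C$ of $\{x\in\mathbb{R}^n:f_1(x)\sigma_10,\dots,f_m(x)\sigma_m0\}$, $$Z(C)\subset\bigcup_{E_\sigma\subset S\subset\{1,\dots,m\},\ S\ne\emptyset}\pi_x(W_S).$$
   Context: For nonempty $A\subset\mathbb{R}^n$ with closure $\overline A$ and $\pi_1$ the first coordinate projection: $Z_{\inf}(A)=\{x\in\overline A:x_1=\inf\pi_1(A)\}$ if $\pi_1(A)$ is bounded below (else $\emptyset$), $Z_{\sup}(A)=\{x\in\overline A:x_1=\sup\pi_1(A)\}$ if $\pi_1(A)$ is bounded above (else $\emptyset$), $Z(A)=Z_{\inf}(A)\cup Z_{\sup}(A)$. For $S=\{i_1,\dots,i_s\}\subset\{1,\dots,m\}$: if $s=1$, $W_S=\{z\in\mathbb{C}^n: f_{i_1}(z)=\frac{\partial f_{i_1}}{\partial x_2}(z)=\dots=\frac{\partial f_{i_1}}{\partial x_n}(z)=0\}$; if $2\le s\le n-1$, $W_S\subset\mathbb{C}^n\times\mathbb{P}^{s-1}$ is the set of $(z,(\mu_1:\dots:\mu_s))$ with $f_{i_1}(z)=\dots=f_{i_s}(z)=0$ and $\sum_{j=1}^s\mu_j\frac{\partial f_{i_j}}{\partial x_k}(z)=0$ for $k=2,\dots,n$; if $s\ge n$, $W_S=\{z\in\mathbb{C}^n:f_{i_1}(z)=\dots=f_{i_s}(z)=0\}$.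 $\pi_x$ denotes the projection onto the $x$-coordinates (the identity when $W_S\subset\mathbb{C}^n$), and $\mathbb{R}^n$ is viewed inside $\mathbb{C}^n$. *)

From HB Require Import structures.
From mathcomp Require Import all_boot all_order all_algebra.
From mathcomp Require Import all_classical all_reals all_analysis.
From mathcomp Require Import complex.
From mathcomp Require mpoly.

Set Implicit Arguments.
Unset Strict Implicit.
Unset Printing Implicit Defensive.

Import Order.TTheory GRing.Theory Num.Theory.
Import numFieldNormedType.Exports.
Local Open Scope classical_set_scope.
Local Open Scope ring_scope.

Inductive sign_rel := sLe | sLt | sEq | sGt | sGe.

Section Defs.
Variable R : realType.

Definition sign_holds (s : sign_rel) (a : R) : bool :=
  match s with
  | sLe => a <= 0
  | sLt => a < 0
  | sEq => a == 0
  | sGt => a > 0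
  | sGe => a >= 0
  end.

(* Points of R^n are row vectors 'rV[R]_n (product = Euclidean topology);
   the coordinate x_{j+1} is x ord0 j. *)

Definition semialg_set (n m : nat) (f : 'I_m -> mpoly.mpoly n R)
  (sigma : 'I_m -> sign_rel) : set 'rV[R]_n :=
  [set x | forall i : 'I_m,
      sign_holds (sigma i) (mpoly.meval (fun j => x ord0 j) (f i))].

Definition Eset (m : nat) (sigma : 'I_m -> sign_rel) : {set 'I_m} :=
  [set i | if sigma i is sEq then true else false].

Definition is_connected_component (T : topologicalType) (X C : set T) : Prop :=
  exists2 x, X x & C = connected_component X x.

Definition pi1 (n : nat) (x : 'rV[R]_n.+1) : R := x ord0 ord0.

Definition Zinf (n : nat) (A : set 'rV[R]_n.+1) : set 'rV[R]_n.+1 :=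
  [set x | has_lbound (@pi1 n @` A) /\ closure A x /\ @pi1 n x = inf (@pi1 n @` A)].

Definition Zsup (n : nat) (A : set 'rV[R]_n.+1) : set 'rV[R]_n.+1 :=
  [set x | has_ubound (@pi1 n @` A) /\ closure A x /\ @pi1 n x = sup (@pi1 n @` A)].

Definition Zset (n : nat) (A : set 'rV[R]_n.+1) : set 'rV[R]_n.+1 :=
  Zinf A `|` Zsup A.

Definition cev (N : nat) (z : 'I_N -> R[i]) (p : mpoly.mpoly N R) : R[i] :=
  mpoly.mmap (real_complex R) z p.

(* pi_x(W_S) for S a subset of {1..m}, with N = n.+1 variables
   (x_1 = index ord0, x_2..x_N = the indices k != ord0), s = #|S|.
   For 2 <= s <= N-1, W_S lives in C^N x P^{s-1}; a point of P^{s-1}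
   is represented by a nonzero family (mu_i)_{i in S} of complex numbers,
   and pi_x(W_S) is the set of z for which such a mu exists. *)
Definition piW (n m : nat) (f : 'I_m -> mpoly.mpoly n.+1 R) (S : {set 'I_m})
  (z : 'I_n.+1 -> R[i]) : Prop :=
  if #|S| == 1%N then
    forall i, i \in S ->
      cev z (f i) = 0 /\
      forall k : 'I_n.+1, k != ord0 -> cev z (mpoly.mderiv k (f i)) = 0
  else if (2 <= #|S| <= n)%N then
    (forall i, i \in S -> cev z (f i) = 0) /\
    exists mu : 'I_m -> R[i],
      (exists2 i, i \in S & mu i != 0) /\
      forall k : 'I_n.+1, k != ord0 ->
        \sum_(i in S) mu i * cev z (mpoly.mderiv k (f i)) = 0
  else if (n.+1 <= #|S|)%N then
    forall i, i \in S -> cev z (f i) = 0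
  else False.

Definition realC (n : nat) (x : 'rV[R]_n) : 'I_n -> R[i] :=
  fun j => real_complex R (x ord0 j).

End Defs.

From HB Require Import structures.
From mathcomp Require Import all_boot all_order all_algebra.
From mathcomp Require Import mpoly.
From mathcomp Require Import all_classical all_reals all_analysis.
From mathcomp Require Import complex.
From mathcomp Require Import ring lra.

Import numFieldNormedType.Exports.
Local Open Scope classical_set_scope.
Local Open Scope ring_scope.
Set Implicit Arguments.
Unset Strict Implicit.
Unset Printing Implicit Defensive.
Import Order.TTheory GRing.Theory Num.Theory.

(* Let x be a point of Z(C), say with x_1 = inf pi_1(C), and suppose that x lies on no
   pi_x(W_S).  Let A be the set of constraints vanishing at x; it contains E_sigma because x
   is a limit of points of C.  As x is not in pi_x(W_A), the gradients of the f_i, i in A,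
   with their x_1-component dropped, are linearly independent (and #A <= n).  Solving
   f_i(y) = f_i(c), i in A, in the directions x_2, ..., x_n by a contraction argument joins
   every point c of C close to x, inside the semialgebraic set (the inactive constraints
   keep their strict signs near x), to a point with first coordinate c_1 - delta, where
   delta does not depend on c.  For c close enough to x this point of C lies below
   inf pi_1(C). *)

Section MatrixNorm.
Variable R : realFieldType.

Lemma ler_mxnorm_entry p q (M : 'M[R]_(p, q)) i j : `|M i j| <= `|M|.
Proof.
by rewrite [leRHS]/Num.Def.normr /= mx_normrE; apply/bigmax_geP; right; exists (i, j).
Qed.

Lemma mxnorm_le p q (M : 'M[R]_(p, q)) b :
  0 <= b -> (forall i j, `|M i j| <= b) -> `|M| <= b.
Proof.
move=> b0 Mb; rewrite [leLHS]/Num.Def.normr /= mx_normrE.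
by apply: bigmax_le => // -[i j] _; exact: Mb.
Qed.

Lemma mulmx_norm_bound p q r (M : 'M[R]_(q, r)) :
  exists2 K, 0 < K & forall v : 'M[R]_(p, q), `|v *m M| <= K * `|v|.
Proof.
have S0 : 0 <= \sum_j \sum_k `|M j k| by rewrite !sumr_ge0 // => j _; rewrite sumr_ge0.
exists (1 + \sum_j \sum_k `|M j k|); first by rewrite ltr_wpDr.
move=> v; apply: mxnorm_le => [|i k]; first by rewrite mulr_ge0 // addr_ge0.
rewrite mxE; apply: le_trans (ler_norm_sum _ _ _) _.
apply: le_trans (_ : \sum_j `|v| * `|M j k| <= _).
  by apply: ler_sum => j _; rewrite normrM ler_wpM2r // ler_mxnorm_entry.
rewrite -mulr_sumr mulrC ler_wpM2r // -[leLHS]add0r lerD //.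
by apply: ler_sum => j _; rewrite (bigD1 k) //= lerDl sumr_ge0.
Qed.

End MatrixNorm.

Section DotProduct.
Variables (R : realFieldType) (N : nat).
Implicit Types g h : 'rV[R]_N.

Definition dotv g h := \sum_k g ord0 k * h ord0 k.
Definition norm1 g := \sum_k `|g ord0 k|.

Lemma norm1_ge0 g : 0 <= norm1 g.
Proof. by rewrite sumr_ge0. Qed.

Lemma ler_dotv g h : `|dotv g h| <= norm1 g * `|h|.
Proof.
apply: le_trans (ler_norm_sum _ _ _) _; rewrite /norm1 mulr_suml.
by apply: ler_sum => k _; rewrite normrM ler_wpM2l // ler_mxnorm_entry.
Qed.

Lemma dotv0l h : dotv 0 h = 0.
Proof. by rewrite /dotv big1 // => k _; rewrite mxE mul0r. Qed.

Lemma dotvDl g1 g2 h : dotv (g1 + g2) h = dotv g1 h + dotv g2 h.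
Proof. by rewrite /dotv -big_split; apply: eq_bigr => k _; rewrite mxE mulrDl. Qed.

Lemma dotvZl a g h : dotv (a *: g) h = a * dotv g h.
Proof. by rewrite /dotv mulr_sumr; apply: eq_bigr => k _; rewrite mxE mulrA. Qed.

Lemma dotv_mulmx m g (u : 'rV[R]_m) (W : 'M[R]_(m, N)) :
  dotv g (u *m W) = \sum_j u ord0 j * dotv g (row j W).
Proof.
rewrite /dotv; under eq_bigr do rewrite mxE mulr_sumr.
rewrite exchange_big /=; apply: eq_bigr => j _; rewrite mulr_sumr.
by apply: eq_bigr => k _; rewrite mxE mulrCA.
Qed.

Lemma dotv_self_eq0 (v : 'rV[R]_N) : dotv v v = 0 -> v = 0.
Proof.
move=> vv0; apply/rowP => k; rewrite [RHS]mxE.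
have sq_ge0 j : true -> 0 <= v ord0 j * v ord0 j by rewrite -expr2 sqr_ge0.
have := psumr_eq0P sq_ge0 vv0 (i := k) isT.
by move=> /eqP; rewrite mulf_eq0 orbb => /eqP.
Qed.

End DotProduct.

Section StrictGradient.
Variables (R : realFieldType) (N : nat).
Implicit Types (x y : 'rV[R]_N) (phi psi : 'rV[R]_N -> R) (g h : 'rV[R]_N).

Definition strict_grad x phi g := forall e, 0 < e -> exists2 r, 0 < r &
  forall y y', `|y - x| < r -> `|y' - x| < r ->
    `|phi y - phi y' - dotv g (y - y')| <= e * `|y - y'|.

Lemma ler_dist_linearization phi g e y y' :
  `|phi y - phi y' - dotv g (y - y')| <= e * `|y - y'| ->
  `|phi y - phi y'| <= (norm1 g + e) * `|y - y'|.
Proof.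
by have := ler_dotv g (y - y'); have := lerB_dist (phi y - phi y') (dotv g (y - y')); lra.
Qed.

Lemma strict_grad_lipschitz x phi g : strict_grad x phi g ->
  exists2 r, 0 < r & forall y y', `|y - x| < r -> `|y' - x| < r ->
    `|phi y - phi y'| <= (norm1 g + 1) * `|y - y'|.
Proof.
move=> phi_g; have [r r0 phi_r] := phi_g 1 ltr01; exists r => // y y' yx y'x.
exact/ler_dist_linearization/phi_r.
Qed.

Lemma eq_strict_grad x phi psi g : phi =1 psi -> strict_grad x phi g -> strict_grad x psi g.
Proof.
move=> E phi_g e e0; have [r r0 phi_r] := phi_g e e0.
by exists r => // y y'; rewrite -!E; exact: phi_r.
Qed.

Lemma strict_grad_cst x c : strict_grad x (fun=> c) 0.
Proof.
move=> e e0; exists 1 => // y y' _ _.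
by rewrite dotv0l !subrr normr0 mulr_ge0 // ltW.
Qed.

Lemma strict_grad_coord x i : strict_grad x (fun y => y ord0 i) (\row_k (k == i)%:R).
Proof.
move=> e e0; exists 1 => // y y' _ _.
have -> : dotv (\row_k (k == i)%:R) (y - y') = y ord0 i - y' ord0 i.
  rewrite /dotv (bigD1 i) //= big1 => [|k ki]; last by rewrite mxE (negbTE ki) mul0r.
  by rewrite !mxE eqxx mul1r addr0.
by rewrite subrr normr0 mulr_ge0 // ltW.
Qed.

Lemma strict_grad_add x phi psi g h : strict_grad x phi g -> strict_grad x psi h ->
  strict_grad x (fun y => phi y + psi y) (g + h).
Proof.
move=> phi_g psi_h e e0; have e2 : 0 < e / 2 by rewrite divr_gt0.
have [r1 r10 phi_r] := phi_g _ e2; have [r2 r20 psi_r] := psi_h _ e2.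
exists (Num.min r1 r2) => [|y y']; first by rewrite lt_min r10 r20.
rewrite !lt_min => /andP[yx1 yx2] /andP[y'x1 y'x2].
have := phi_r _ _ yx1 y'x1; have := psi_r _ _ yx2 y'x2; rewrite dotvDl.
set a := phi y - phi y' - _; set b := psi y - psi y' - _ => bB aB.
have -> : phi y + psi y - (phi y' + psi y') - (dotv g (y - y') + dotv h (y - y')) = a + b.
  by rewrite /a /b; ring.
by apply: le_trans (ler_normD _ _) _; lra.
Qed.

(* [ab - a'b' - (a0 v + b0 u) = a (b - b' - v) + (a - a0) v + b' (a - a' - u) + (b' - b0) u] *)
Lemma ler_mul_linearization (a a' a0 b b' b0 u v : R) :
  `|a * b - a' * b' - (a0 * v + b0 * u)| <=
  `|a| * `|b - b' - v| + `|a - a0| * `|v| + `|b'| * `|a - a' - u| + `|b' - b0| * `|u|.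
Proof.
have -> : a * b - a' * b' - (a0 * v + b0 * u) =
    a * (b - b' - v) + (a - a0) * v + b' * (a - a' - u) + (b' - b0) * u by ring.
rewrite -!normrM; apply: le_trans (ler_normD _ _) _; rewrite lerD2r.
by apply: le_trans (ler_normD _ _) _; rewrite lerD2r; exact: ler_normD.
Qed.

Lemma strict_grad_mul x phi psi g h : strict_grad x phi g -> strict_grad x psi h ->
  strict_grad x (fun y => phi y * psi y) (phi x *: h + psi x *: g).
Proof.
move=> phi_g psi_h e e0.
have [rp rp0 phi_lip] := strict_grad_lipschitz phi_g.
have [rq rq0 psi_lip] := strict_grad_lipschitz psi_h.
set Kp := norm1 g + 1 in phi_lip; set Kq := norm1 h + 1 in psi_lip.
have ng0 := norm1_ge0 g; have nh0 := norm1_ge0 h.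
have Kp0 : 0 < Kp by rewrite ltr_wpDl.
have Kq0 : 0 < Kq by rewrite ltr_wpDl.
set P := `|phi x|; set Q := `|psi x|.
have P0 : 0 <= P := normr_ge0 _; have Q0 : 0 <= Q := normr_ge0 _.
set M := P + 1 + (Q + 1) + Kp * norm1 h + Kq * norm1 g.
have M0 : 0 < M by rewrite /M; nra.
set e1 := e / M; have e10 : 0 < e1 by rewrite divr_gt0.
have [r1 r10 phi_r] := phi_g _ e10; have [r2 r20 psi_r] := psi_h _ e10.
exists (Num.min (Num.min (Num.min r1 r2) (Num.min rp rq))
                (Num.min (Num.min Kp^-1 Kq^-1) e1)).
  by rewrite !lt_min r10 r20 rp0 rq0 e10 !invr_gt0 Kp0 Kq0.
move=> y y'; rewrite !lt_min.
move=> /andP[/andP[/andP[y1 y2] /andP[yp _]] /andP[/andP[yKp _] /ltW ye]].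
move=> /andP[/andP[/andP[y'1 y'2] /andP[_ y'q]] /andP[/andP[_ y'Kq] /ltW y'e]].
have xx r : 0 < r -> `|x - x| < r by rewrite subrr normr0.
have phi_y := phi_lip _ _ yp (xx _ rp0); have psi_y' := psi_lip _ _ y'q (xx _ rq0).
have Kpy : Kp * `|y - x| <= 1 by rewrite mulrC -ler_pdivlMr // mul1r ltW.
have Kqy : Kq * `|y' - x| <= 1 by rewrite mulrC -ler_pdivlMr // mul1r ltW.
have phi_y_le : `|phi y| <= P + 1 by have := lerB_dist (phi y) (phi x); rewrite -/P; lra.
have psi_y'_le : `|psi y'| <= Q + 1 by have := lerB_dist (psi y') (psi x); rewrite -/Q; lra.
have phi_yx : `|phi y - phi x| <= Kp * e1 by apply: le_trans phi_y _; rewrite ler_wpM2l // ltW.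
have psi_yx : `|psi y' - psi x| <= Kq * e1 by apply: le_trans psi_y' _; rewrite ler_wpM2l // ltW.
rewrite dotvDl !dotvZl.
apply: le_trans (ler_mul_linearization _ _ _ _ _ _ _ _) _.
have := psi_r _ _ y2 y'2; have := phi_r _ _ y1 y'1.
have := ler_dotv h (y - y'); have := ler_dotv g (y - y').
set D := `|y - y'|; have D0 : 0 <= D := normr_ge0 _.
move=> gD hD phiD psiD.
have -> : e * D = (P + 1) * (e1 * D) + (Kp * e1) * (norm1 h * D) +
                  (Q + 1) * (e1 * D) + (Kq * e1) * (norm1 g * D).
  by rewrite /e1 /M; field; rewrite gt_eqF.
by rewrite !lerD // ler_pM.
Qed.

End StrictGradient.

Section PolynomialGradient.
Variables (R : realType) (N : nat).

Definition pev (p : mpoly.mpoly N R) (y : 'rV[R]_N) := mpoly.meval (fun j => y ord0 j) p.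

Definition pgrad (p : mpoly.mpoly N R) (x : 'rV[R]_N) : 'rV[R]_N :=
  \row_k pev (mpoly.mderiv k p) x.

Lemma strict_grad_pev (x : 'rV[R]_N) p : strict_grad x (pev p) (pgrad p x).
Proof.
pose P q := strict_grad x (pev q) (pgrad q x).
have PD p1 q : P p1 -> P q -> P (p1 + q).
  move=> /strict_grad_add /[apply]; rewrite /P.
  have -> : pgrad (p1 + q) x = pgrad p1 x + pgrad q x.
    by apply/rowP => k; rewrite !mxE /pev mpoly.mderivD mpoly.mevalD.
  by apply: eq_strict_grad => y; rewrite /pev mpoly.mevalD.
have PM p1 q : P p1 -> P q -> P (p1 * q).
  move=> /strict_grad_mul /[apply]; rewrite /P.
  have -> : pgrad (p1 * q) x = pev p1 x *: pgrad q x + pev q x *: pgrad p1 x.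
    apply/rowP => k; rewrite !mxE /pev mpoly.mderivM mpoly.mevalD !mpoly.mevalM.
    by rewrite addrC mulrC.
  by apply: eq_strict_grad => y; rewrite /pev mpoly.mevalM.
have PC c : P (mpoly.mpolyC N c).
  rewrite /P.
  have -> : pgrad (mpoly.mpolyC N c) x = 0.
    by apply/rowP => k; rewrite !mxE /pev mpoly.mderivC mpoly.meval0.
  by apply: eq_strict_grad (strict_grad_cst x c) => y; rewrite /pev mpoly.mevalC.
have PX i : P (mpoly.mpolyX R (mpoly.mnm1 i)).
  rewrite /P.
  have -> : pgrad (mpoly.mpolyX R (mpoly.mnm1 i)) x = \row_k (k == i)%:R.
    apply/rowP => k; rewrite !mxE /pev mpoly.mderivX mpoly.mevalZ mpoly.mnm1E eq_sym.
    case: eqP => [->|_]; last by rewrite mul0r.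
    have mm0 (mm : 'X_{1..N}) : (mm - mm)%MM = 0%MM.
      by apply/mnmP => j; rewrite mnmBE subnn mnm0E.
    by rewrite mm0 mpoly.mpolyX0 mpoly.meval1 mulr1.
  by apply: eq_strict_grad (strict_grad_coord x i) => y; rewrite /pev mpoly.mevalXU.
have P1 : P 1 by rewrite -mpoly.mpolyC1; exact: PC.
have PXm m : P (mpoly.mpolyX R m).
  rewrite mpoly.mpolyXE_id; apply: big_ind => // i _.
  by elim: (mpoly.fun_of_multinom m i) => [|k IH]; rewrite ?expr0 // exprS; apply: PM.
elim/mpoly.mpolyind: p => [|c m p _ _ Pp]; first by rewrite -mpoly.mpolyC0; exact: PC.
by apply: PD => //; rewrite -mpoly.mul_mpolyC; apply: PM.
Qed.

Lemma pev_sign_near (x : 'rV[R]_N) p : pev p x != 0 ->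
  exists2 r, 0 < r & forall y, `|y - x| < r -> 0 < pev p y * pev p x.
Proof.
move=> px0; have [r r0 p_lip] := strict_grad_lipschitz (strict_grad_pev x p).
set K := norm1 _ + 1 in p_lip.
have K0 : 0 < K by rewrite ltr_wpDl // norm1_ge0.
have npx0 : 0 < `|pev p x| by rewrite normr_gt0.
exists (Num.min r (`|pev p x| / K)) => [|y]; first by rewrite lt_min r0 divr_gt0.
rewrite lt_min => /andP[yr yK].
have xx : `|x - x| < r by rewrite subrr normr0.
have : `|pev p y - pev p x| < `|pev p x|.
  by apply: le_lt_trans (p_lip _ _ yr xx) _; rewrite mulrC -ltr_pdivlMr.
set a := pev p y; set b := pev p x; rewrite ltr_norml => /andP[ab1 ab2].
case: (ltrgtP b 0) => b0; last by move: npx0; rewrite -/b b0 normr0 ltxx.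
- by rewrite ltr0_norm // in ab1 ab2; nra.
- by rewrite gtr0_norm // in ab1 ab2; nra.
Qed.

End PolynomialGradient.

Section RealAuxiliaries.
Variable R : realType.

Lemma ex_common_radius (I : finType) (P : I -> R -> Prop) :
  (forall i r r', P i r -> 0 < r' -> r' <= r -> P i r') ->
  (forall i, exists2 r, 0 < r & P i r) -> exists2 r, 0 < r & forall i, P i r.
Proof.
move=> Pmon Pex.
have /choice[rf rfP] : forall i, exists r, 0 < r /\ P i r.
  by move=> i; have [r r0 Pr] := Pex i; exists r.
have rfV_ge0 i : 0 <= (rf i)^-1 by rewrite invr_ge0 ltW //; case: (rfP i).
have S_gt0 : 0 < 1 + \sum_i (rf i)^-1 by rewrite ltr_wpDr // sumr_ge0.
exists (1 + \sum_i (rf i)^-1)^-1 => [|i]; first by rewrite invr_gt0.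
have [ri Pi] := rfP i; apply: Pmon Pi _ _; first by rewrite invr_gt0.
rewrite -(invrK (rf i)) lef_pV2 ?posrE ?invr_gt0 // (bigD1 i) //=.
have : 0 <= \sum_(j | j != i) (rf j)^-1 by rewrite sumr_ge0.
lra.
Qed.

Lemma lipschitz_continuous (V : normedModType R) (f : R -> V) L :
  (forall t t', `|f t - f t'| <= L * `|t - t'|) -> continuous f.
Proof.
move=> f_lip t; apply/cvgrPdist_lt => e e0.
have L1 : 0 < `|L| + 1 by rewrite ltr_wpDl.
apply/nbhs_normP; exists (e / (`|L| + 1)) => [|y /= ty]; first by rewrite /= divr_gt0.
apply: le_lt_trans (f_lip t y) _; apply: le_lt_trans (ler_norm (L * `|t - y|)) _.
rewrite normrM normr_id; apply: le_lt_trans (_ : (`|L| + 1) * `|t - y| < e).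
  by rewrite ler_wpM2r // lerDl.
by rewrite mulrC -ltr_pdivlMr.
Qed.

Definition clamp (delta t : R) := Num.max 0 (Num.min t delta).

Lemma clamp_itv delta t : 0 <= delta -> 0 <= clamp delta t <= delta.
Proof.
move=> d0; rewrite /clamp !maxEle !minEle.
by case: (leP t delta) => h1; case: (leP 0 t) => h2; case: (leP 0 delta) => h3;
  apply/andP; split; lra.
Qed.

Lemma clamp_id delta t : 0 <= t <= delta -> clamp delta t = t.
Proof.
move=> /andP[h1 h2]; rewrite /clamp !maxEle !minEle.
by case: (leP t delta) => h3; case: (leP 0 t) => h4; lra.
Qed.

Lemma clamp_lipschitz delta t t' : `|clamp delta t - clamp delta t'| <= `|t - t'|.
Proof.
have n1 := ler_norm (t - t'); have n2 : - (t - t') <= `|t - t'| by rewrite -normrN ler_norm.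
rewrite ler_norml /clamp !maxEle !minEle.
case: (leP t delta) => h1; case: (leP t' delta) => h2; case: (leP 0 t) => h3;
  case: (leP 0 t') => h4; case: (leP 0 delta) => h5; apply/andP; split; lra.
Qed.

End RealAuxiliaries.

(* Row vectors as a complete normed space, for the Banach fixed point theorem. *)
HB.instance Definition _ (R : realType) (m n : nat) := Complete.on 'M[R]_(m, n).

Section ParametricContraction.
Variables (R : realType) (V : completeNormedModType R) (delta beta L : R).
Variable T : R -> V -> V.
Hypothesis beta_gt0 : 0 < beta.
Hypothesis T_ball : forall t u, 0 <= t <= delta -> `|u| <= beta -> `|T t u| <= beta.
Hypothesis T_contraction : forall t u u', 0 <= t <= delta ->
  `|u| <= beta -> `|u'| <= beta -> `|T t u - T t u'| <= 2^-1 * `|u - u'|.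
Hypothesis T_lipschitz : forall t t' u, 0 <= t <= delta -> 0 <= t' <= delta ->
  `|u| <= beta -> `|T t u - T t' u| <= L * `|t - t'|.

Lemma exists_fixed_point t : 0 <= t <= delta -> exists2 u, `|u| <= beta & u = T t u.
Proof.
move=> t_itv; pose U := closed_ball (0 : V) beta.
have UE u : U u <-> `|u| <= beta.
  by rewrite /U closed_ballE //= /closed_ball_ /= sub0r normrN.
have T_U : {homo T t : u / U u >-> U u} by move=> u /UE u_le; apply/UE; exact: T_ball.
have T_contr : is_contraction (mkfun T_U).
  exists (2^-1)%:nng; split; first by rewrite /= invf_lt1 // ltr1n.
  by move=> [u u'] [/= /UE u_le /UE u'_le]; exact: T_contraction.
have U0 : U !=set0 by exists 0; apply/UE; rewrite normr0 ltW.
have [u Uu uT] := banach_fixed_point T_contr (@closed_ball_closed _ _ (0 : V) beta) U0.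
by exists u => //; apply/UE.
Qed.

Lemma fixed_point_lipschitz t t' u u' : 0 <= t <= delta -> 0 <= t' <= delta ->
  `|u| <= beta -> `|u'| <= beta -> u = T t u -> u' = T t' u' ->
  `|u - u'| <= 2 * L * `|t - t'|.
Proof.
move=> t_itv t'_itv u_le u'_le uT u'T.
have := T_contraction t_itv u_le u'_le; have := T_lipschitz t_itv t'_itv u'_le.
by have := ler_distD (T t u') (T t u) (T t' u'); rewrite -uT -u'T; lra.
Qed.

End ParametricContraction.

Section ConstraintMatrix.
Variables (R : realFieldType) (N m : nat).

(* When [g i] is the gradient of [phi_i], the column [i \in A] is the gradient of
   [u |-> phi_i (c + u *m W)] at [u = 0]; the columns [i \notin A] are those of the identity. *)
Definition constraint_mx (g : 'I_m -> 'rV[R]_N) (A : {set 'I_m}) (W : 'M[R]_(m, N)) :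
  'M[R]_m := \matrix_(j, i) (if i \in A then dotv (g i) (row j W) else (i == j)%:R).

Lemma mulmx_constraint_mx g A W (h : 'rV[R]_m) i :
  (h *m constraint_mx g A W) ord0 i = if i \in A then dotv (g i) (h *m W) else h ord0 i.
Proof.
rewrite [LHS]mxE; case: ifP => Ai.
  by rewrite dotv_mulmx; apply: eq_bigr => j _; rewrite mxE Ai.
rewrite (bigD1 i) //= big1 => [|j ji]; last by rewrite mxE Ai eq_sym (negbTE ji) mulr0.
by rewrite mxE Ai eqxx mulr1 addr0.
Qed.

End ConstraintMatrix.

Section ChordIteration.
Variables (R : realType) (N m : nat) (x c d : 'rV[R]_N).
Variables (phi : 'I_m -> 'rV[R]_N -> R) (g : 'I_m -> 'rV[R]_N).
Variables (A : {set 'I_m}) (W : 'M[R]_(m, N)).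
Variables (r e Lphi KJ KW beta delta : R).
Let J := constraint_mx g A W.
Hypothesis J_unit : J \in unitmx.
Hypothesis invJ_bound : forall v : 'rV[R]_m, `|v *m invmx J| <= KJ * `|v|.
Hypothesis W_bound : forall v : 'rV[R]_m, `|v *m W| <= KW * `|v|.
Hypotheses (KJ_gt0 : 0 < KJ) (KW_ge0 : 0 <= KW) (e_ge0 : 0 <= e) (Lphi_ge0 : 0 <= Lphi).
Hypotheses (beta_gt0 : 0 < beta) (delta_gt0 : 0 < delta).
Hypothesis phi_strict : forall i, i \in A -> forall y y', `|y - x| < r -> `|y' - x| < r ->
  `|phi i y - phi i y' - dotv (g i) (y - y')| <= e * `|y - y'|.
Hypothesis phi_lipschitz : forall i, i \in A -> forall y y', `|y - x| < r -> `|y' - x| < r ->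
  `|phi i y - phi i y'| <= Lphi * `|y - y'|.
Hypothesis e_small : KJ * (e * KW) <= 2^-1.
Hypothesis box_small : `|c - x| + delta * `|d| + KW * beta < r.
Hypothesis delta_small : KJ * (Lphi * `|d| * delta) <= beta / 2.

Let pt t (u : 'rV[R]_m) := c + t *: d + u *m W.

Let residual t u : 'rV[R]_m :=
  \row_i (if i \in A then phi i (pt t u) - phi i c else u ord0 i).

(* The chord method for [residual t u = 0]: Newton's method with the derivative frozen to
   [J], which [phi_strict] and [e_small] make a contraction. *)
Let chord t u := u - residual t u *m invmx J.

Let ptB t t' u u' : pt t u - pt t' u' = (t - t') *: d + (u - u') *m W.
Proof.
rewrite /pt scalerBl mulmxBl opprD addrACA; congr (_ + _).
by rewrite opprD addrACA subrr add0r.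
Qed.

Let pt_near t u : 0 <= t <= delta -> `|u| <= beta -> `|pt t u - x| < r.
Proof.
move=> /andP[t0 td] u_le.
have -> : pt t u - x = (c - x) + t *: d + u *m W by rewrite /pt addrAC [c + _ + _]addrAC.
apply: le_lt_trans (ler_normD _ _) _.
apply: le_lt_trans (lerD (ler_normD _ _) (W_bound u)) _.
rewrite normrZ ger0_norm //; apply: le_lt_trans box_small.
by rewrite -!addrA lerD2l lerD // ?ler_wpM2r ?ler_wpM2l.
Qed.

Let residual_lipschitz t t' u : 0 <= t <= delta -> 0 <= t' <= delta -> `|u| <= beta ->
  `|residual t u - residual t' u| <= Lphi * `|d| * `|t - t'|.
Proof.
move=> t_itv t'_itv u_le; apply: mxnorm_le => [|i0 i]; first by rewrite !mulr_ge0.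
rewrite !mxE; case: ifP => Ai; last by rewrite subrr normr0 !mulr_ge0.
rewrite opprB addrA subrK.
apply: le_trans (phi_lipschitz Ai (pt_near t_itv u_le) (pt_near t'_itv u_le)) _.
by rewrite ptB subrr mul0mx addr0 normrZ -mulrA [`|d| * _]mulrC.
Qed.

Let chord_lipschitz t t' u : 0 <= t <= delta -> 0 <= t' <= delta -> `|u| <= beta ->
  `|chord t u - chord t' u| <= KJ * (Lphi * `|d|) * `|t - t'|.
Proof.
move=> t_itv t'_itv u_le.
have -> : chord t u - chord t' u = (residual t' u - residual t u) *m invmx J.
  by rewrite /chord mulmxBl opprB addrC addrA subrK.
apply: le_trans (invJ_bound _) _; rewrite -mulrA ler_pM2l //.
by rewrite [`|t - t'|]distrC; exact: residual_lipschitz.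
Qed.

Let chord_contraction t u u' : 0 <= t <= delta -> `|u| <= beta -> `|u'| <= beta ->
  `|chord t u - chord t u'| <= 2^-1 * `|u - u'|.
Proof.
move=> t_itv u_le u'_le.
have -> : chord t u - chord t u' =
    ((u - u') *m J - (residual t u - residual t u')) *m invmx J.
  by rewrite mulmxBl -mulmxA mulmxV // mulmx1 /chord mulmxBl !opprD !opprK addrACA.
apply: le_trans (invJ_bound _) _; apply: le_trans (_ : KJ * (e * (KW * `|u - u'|)) <= _).
  rewrite ler_pM2l //; apply: mxnorm_le => [|i0 i]; first by rewrite !mulr_ge0.
  rewrite (ord1 i0) mxE mulmx_constraint_mx !mxE; case: ifP => Ai; last first.
    by rewrite subrr normr0 !mulr_ge0.
  have -> : dotv (g i) ((u - u') *m W) - (phi i (pt t u) - phi i c - (phi i (pt t u') - phi i c))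
      = - (phi i (pt t u) - phi i (pt t u') - dotv (g i) (pt t u - pt t u')).
    by rewrite ptB subrr scale0r add0r; ring.
  rewrite normrN; apply: le_trans (phi_strict Ai (pt_near t_itv u_le) (pt_near t_itv u'_le)) _.
  by rewrite ler_wpM2l // ptB subrr scale0r add0r.
rewrite mulrA mulrA -[X in X * _]mulrA ler_wpM2r //.
Qed.

Let residual00 : residual 0 0 = 0.
Proof.
by apply/rowP => i; rewrite !mxE /pt scale0r mul0mx !addr0 subrr; case: (i \in A).
Qed.

Let chord_ball t u : 0 <= t <= delta -> `|u| <= beta -> `|chord t u| <= beta.
Proof.
move=> t_itv u_le.
have d0 : 0 <= (0 : R) <= delta by rewrite lexx ltW.
have chord_t0 : `|chord t 0| <= beta / 2.
  have -> : chord t 0 = chord t 0 - chord 0 0 by rewrite /chord residual00 mul0mx subrr subr0.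
  apply: le_trans (chord_lipschitz t_itv d0 _) _; first by rewrite normr0 ltW.
  apply: le_trans delta_small; rewrite subr0 -mulrA ler_pM2l // ler_wpM2l ?mulr_ge0 //.
  by case/andP: t_itv => t0 td; rewrite ger0_norm.
have := chord_contraction t_itv u_le (_ : `|0| <= beta).
rewrite normr0 subr0 => /(_ (ltW beta_gt0)).
by have := lerB_dist (chord t u) (chord t 0); lra.
Qed.

Let chord_fixed_point t u : u = chord t u -> forall i, i \in A -> phi i (pt t u) = phi i c.
Proof.
move=> uE i Ai.
have : u - chord t u = residual t u *m invmx J by rewrite /chord opprB addrC subrK.
rewrite -uE subrr => /esym /(congr1 (mulmx^~ J)); rewrite -mulmxA mulVmx // mulmx1 mul0mx.
by move=> /rowP /(_ i); rewrite !mxE Ai => /eqP; rewrite subr_eq0 => /eqP.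
Qed.

Lemma chord_path : exists2 gam : R -> 'rV[R]_N, gam 0 = c &
  (exists L, forall t t', `|gam t - gam t'| <= L * `|t - t'|) /\
  forall t, 0 <= t <= delta ->
    [/\ `|gam t - x| < r, (forall i, i \in A -> phi i (gam t) = phi i c)
      & exists u, gam t = c + t *: d + u *m W].
Proof.
have clamp_delta t : 0 <= clamp delta t <= delta := clamp_itv t (ltW delta_gt0).
have /choice[uf ufP] : forall t, exists u, `|u| <= beta /\ u = chord (clamp delta t) u.
  move=> t; have [u u_le uE] :=
    exists_fixed_point beta_gt0 chord_ball chord_contraction (clamp_delta t).
  by exists u.
have uf_lip t t' : `|uf t - uf t'| <= 2 * (KJ * (Lphi * `|d|)) * `|t - t'|.
  have [u_le uE] := ufP t; have [u'_le u'E] := ufP t'.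
  apply: le_trans (fixed_point_lipschitz chord_contraction chord_lipschitz
    (clamp_delta t) (clamp_delta t') u_le u'_le uE u'E) _.
  by rewrite ler_wpM2l ?clamp_lipschitz // !mulr_ge0 // ltW.
exists (fun t => pt (clamp delta t) (uf t)).
  have clamp0 : clamp delta 0 = 0 by apply: clamp_id; rewrite lexx ltW.
  have uf0 : uf 0 = 0.
    have [u_le uE] := ufP 0.
    have chord00 : 0 = chord (clamp delta 0) 0 by rewrite clamp0 /chord residual00 mul0mx subr0.
    have := fixed_point_lipschitz chord_contraction chord_lipschitz (clamp_delta 0) (clamp_delta 0)
      u_le (_ : `|0| <= beta) uE chord00.
    rewrite normr0 => /(_ (ltW beta_gt0)).
    by rewrite subrr normr0 mulr0 subr0 normr_le0 => /eqP.
  by rewrite clamp0 uf0 /pt scale0r mul0mx !addr0.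
split.
  exists (`|d| + KW * (2 * (KJ * (Lphi * `|d|)))) => t t'.
  rewrite ptB mulrDl; apply: le_trans (ler_normD _ _) _; apply: lerD.
    by rewrite normrZ mulrC ler_wpM2l ?clamp_lipschitz.
  apply: le_trans (W_bound _) _; rewrite -mulrA; apply: ler_wpM2l => //; exact: uf_lip.
move=> t t_itv; rewrite clamp_id //; have [u_le uE] := ufP t; rewrite clamp_id // in uE.
split; [exact: pt_near | exact: chord_fixed_point | by exists (uf t)].
Qed.

End ChordIteration.

Lemma strict_grad_uniform (R : realType) N (I : finType) (A : {set I}) (x : 'rV[R]_N)
    (phi : I -> 'rV[R]_N -> R) (g : I -> 'rV[R]_N) e eps :
  0 < e -> 0 < eps -> (forall i, i \in A -> strict_grad x (phi i) (g i)) ->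
  exists2 r, 0 < r <= eps & forall i, i \in A ->
    forall y y', `|y - x| < r -> `|y' - x| < r ->
    `|phi i y - phi i y' - dotv (g i) (y - y')| <= e * `|y - y'| /\
    `|phi i y - phi i y'| <= (\sum_j norm1 (g j) + e) * `|y - y'|.
Proof.
move=> e_gt0 eps_gt0 phi_grad.
have [r1 r1_gt0 phi_strict] : exists2 r1, 0 < r1 & forall i, i \in A ->
    forall y y', `|y - x| < r1 -> `|y' - x| < r1 ->
    `|phi i y - phi i y' - dotv (g i) (y - y')| <= e * `|y - y'|.
  apply: ex_common_radius => [i r r' Pr r'0 r'r Ai y y' yx y'x|i].
    by apply: Pr => //; exact: lt_le_trans r'r.
  case Ai: (i \in A); last by exists 1.
  by have [r r0 Pr] := phi_grad i Ai e e_gt0; exists r => // _.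
exists (Num.min r1 eps) => [|i Ai y y' yx y'x].
  by rewrite lt_min r1_gt0 eps_gt0 ge_min lexx orbT.
have r_le1 : Num.min r1 eps <= r1 by rewrite ge_min lexx.
have strict_i := phi_strict i Ai y y' (lt_le_trans yx r_le1) (lt_le_trans y'x r_le1).
split=> //; apply: le_trans (ler_dist_linearization strict_i) _.
by rewrite ler_wpM2r // lerD2r (bigD1 i) //= lerDl sumr_ge0 // => j _; exact: norm1_ge0.
Qed.

Lemma ex_box_constants (R : realType) (r KW KJ L a : R) :
  0 < r -> 0 < KW -> 0 < KJ -> 0 < L -> 0 <= a ->
  exists2 beta, 0 < beta & exists2 delta, 0 < delta &
    [/\ KW * beta = r / 4, delta * a <= r / 4 & KJ * (L * a * delta) <= beta / 2].
Proof.
move=> r_gt0 KW_gt0 KJ_gt0 L_gt0 a_ge0.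
pose beta := r / (4 * KW); have beta_gt0 : 0 < beta by rewrite divr_gt0 ?mulr_gt0.
pose K := a + 1; have K_gt0 : 0 < K by rewrite ltr_wpDl.
pose delta := Num.min (r / (4 * K)) (beta / (2 * KJ * L * K)).
have delta_gt0 : 0 < delta by rewrite lt_min !divr_gt0 ?mulr_gt0.
exists beta => //; exists delta => //; split.
- by rewrite /beta; field; rewrite gt_eqF.
- apply: le_trans (_ : r / (4 * K) * K <= _); last by rewrite invfM mulrA divfK ?gt_eqF.
  apply: ler_pM => //; [exact: ltW | by rewrite ge_min lexx | by rewrite lerDl].
- apply: le_trans (_ : KJ * (L * K * (beta / (2 * KJ * L * K))) <= _).
    apply: ler_wpM2l; first exact: ltW.
    apply: ler_pM; [by rewrite mulr_ge0 // ltW | exact: ltW | | by rewrite ge_min lexx orbT].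
    by apply: ler_wpM2l; rewrite ?lerDl // ltW.
  have -> : KJ * (L * K * (beta / (2 * KJ * L * K))) = beta / 2.
    by field; rewrite !gt_eqF.
  exact: lexx.
Qed.

Lemma constrained_path (R : realType) (N m : nat) (x d : 'rV[R]_N)
    (phi : 'I_m -> 'rV[R]_N -> R) (g : 'I_m -> 'rV[R]_N) (A : {set 'I_m})
    (W : 'M[R]_(m, N)) (eps : R) :
  0 < eps -> (forall i, i \in A -> strict_grad x (phi i) (g i)) ->
  constraint_mx g A W \in unitmx ->
  exists2 rho, 0 < rho & exists2 delta, 0 < delta & forall c, `|c - x| < rho ->
    exists2 gam : R -> 'rV[R]_N, gam 0 = c &
      (exists L, forall t t', `|gam t - gam t'| <= L * `|t - t'|) /\
      forall t, 0 <= t <= delta ->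
        [/\ `|gam t - x| < eps, (forall i, i \in A -> phi i (gam t) = phi i c)
          & exists u, gam t = c + t *: d + u *m W].
Proof.
move=> eps_gt0 phi_grad J_unit.
have [KJ KJ_gt0 invJ_bound] := mulmx_norm_bound 1 (invmx (constraint_mx g A W)).
have [KW KW_gt0 W_bound] := mulmx_norm_bound 1 W.
pose e := (2 * KJ * KW)^-1; have e_gt0 : 0 < e by rewrite invr_gt0 !mulr_gt0.
have e_small : KJ * (e * KW) <= 2^-1.
  by have -> : KJ * (e * KW) = 2^-1 by rewrite /e; field; rewrite !gt_eqF.
have [r /andP[r_gt0 r_eps] phi_est] := strict_grad_uniform e_gt0 eps_gt0 phi_grad.
pose L := \sum_i norm1 (g i) + e.
have L_gt0 : 0 < L by rewrite ltr_wpDl // sumr_ge0 // => i _; exact: norm1_ge0.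
have [beta beta_gt0 [delta delta_gt0 [KW_beta delta_d delta_small]]] :=
  ex_box_constants r_gt0 KW_gt0 KJ_gt0 L_gt0 (normr_ge0 d).
exists (r / 4); first by rewrite divr_gt0.
exists delta => // c cx.
have box_small : `|c - x| + delta * `|d| + KW * beta < r by rewrite KW_beta; lra.
have [gam gam0 [gam_lip gamP]] := chord_path J_unit invJ_bound W_bound KJ_gt0 (ltW KW_gt0)
  (ltW e_gt0) (ltW L_gt0) beta_gt0 delta_gt0 (fun i Ai y y' yx y'x => (phi_est i Ai y y' yx y'x).1)
  (fun i Ai y y' yx y'x => (phi_est i Ai y y' yx y'x).2) e_small box_small delta_small.
exists gam => //; split => // t t_itv; have [gam_near gam_const gam_repr] := gamP t t_itv.
by split => //; exact: lt_le_trans gam_near r_eps.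
Qed.

Section ReducedGradients.
Variables (R : realFieldType) (n m : nat) (g : 'I_m -> 'rV[R]_n.+1) (A : {set 'I_m}).

Definition reduced_mx : 'M[R]_(m, n.+1) :=
  \matrix_(j, k) (if (j \in A) && (k != ord0) then g j ord0 k else 0).

Lemma mulmx_reduced_mx (h : 'rV[R]_m) k :
  (h *m reduced_mx) ord0 k = if k == ord0 then 0 else \sum_(i in A) h ord0 i * g i ord0 k.
Proof.
rewrite mxE; case: eqP => [->|/eqP k0].
  by rewrite big1 // => j _; rewrite mxE eqxx andbF mulr0.
rewrite [RHS]big_mkcond; apply: eq_bigr => j _.
by rewrite mxE k0 andbT; case: (j \in A); rewrite ?mulr0.
Qed.

Hypothesis reduced_free : forall z : 'I_m -> R,
  (forall k, k != ord0 -> \sum_(i in A) z i * g i ord0 k = 0) -> forall i, i \in A -> z i = 0.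

Lemma unitmx_constraint_reduced : constraint_mx g A reduced_mx \in unitmx.
Proof.
rewrite -row_free_unit -kermx_eq0; apply/eqP/row_matrixP => i0; rewrite row0.
set h := row i0 _; have hJ : h *m constraint_mx g A reduced_mx = 0.
  by rewrite -row_mul mulmx_ker row0.
set v := h *m reduced_mx; have vE k := mulmx_reduced_mx h k; rewrite -/v in vE.
have hJi i : (if i \in A then dotv (g i) v else h ord0 i) = 0.
  by rewrite -mulmx_constraint_mx hJ mxE.
have vv : dotv v v = \sum_(i in A) h ord0 i * dotv (g i) v.
  rewrite /dotv; under [RHS]eq_bigr do rewrite mulr_sumr.
  rewrite exchange_big /=; apply: eq_bigr => k _; rewrite {1}vE.
  case: eqP => [->|_]; first by rewrite mul0r big1 // => i _; rewrite vE eqxx !mulr0.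
  by rewrite mulr_suml; apply: eq_bigr => i _; rewrite mulrA.
have v0 : v = 0.
  apply: dotv_self_eq0; rewrite vv big1 // => i Ai.
  by have := hJi i; rewrite Ai => ->; rewrite mulr0.
apply/rowP => i; rewrite [RHS]mxE; have := hJi i; case: ifP => Ai // _.
apply: (reduced_free (z := fun i => h ord0 i)) => // k k0.
by have := vE k; rewrite v0 (negbTE k0) mxE => /esym.
Qed.

End ReducedGradients.

Lemma sign_holds_mul_gt0 (R : realType) s (a b : R) :
  0 < a * b -> sign_holds s a = sign_holds s b.
Proof.
move=> ab; have a0 : a != 0 by apply: contraTneq ab => ->; rewrite mul0r ltxx.
have b0 : b != 0 by apply: contraTneq ab => ->; rewrite mulr0 ltxx.
by case: s => /=; rewrite ?(negbTE a0) ?(negbTE b0) //; apply/idP/idP; nra.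
Qed.

Lemma closure_near (R : realType) (V : normedModType R) (S : set V) x :
  closure S x -> forall e, 0 < e -> exists2 c, S c & `|c - x| < e.
Proof.
move=> Sx e e0; have [c [Sc xc]] := Sx _ (nbhsx_ballx x e e0).
by exists c => //; move: xc; rewrite -ball_normE /ball_ /= distrC.
Qed.

Lemma cev_realC (R : realType) N (x : 'rV[R]_N) (p : mpoly.mpoly N R) :
  cev (realC x) p = real_complex R (pev p x).
Proof.
rewrite /cev /pev /meval /mpoly.mmap rmorph_sum; apply: eq_bigr => mm _.
rewrite rmorphM /=; congr (_ * _); rewrite /mpoly.mmap1 rmorph_prod.
by apply: eq_bigr => i _; rewrite rmorphXn.
Qed.

Section SemialgebraicSet.
Variables (R : realType) (n m : nat) (f : 'I_m -> mpoly.mpoly n.+1 R).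
Variable sigma : 'I_m -> sign_rel.
Local Notation F := (semialg_set f sigma).

Definition active_set (x : 'rV[R]_n.+1) : {set 'I_m} := [set i | pev (f i) x == 0].

Definition grads (x : 'rV[R]_n.+1) i := pgrad (f i) x.

Lemma Eset_sub_active x : closure F x -> Eset sigma \subset active_set x.
Proof.
move=> clFx; apply/fintype.subsetP => i; rewrite !inE; case sg : (sigma i) => // _.
apply/negPn/negP => fx0; have [r r0 sgn] := pev_sign_near fx0.
have [c Fc cx] := closure_near clFx r0; have := Fc i; rewrite sg /= => /eqP fc0.
by have := sgn c cx; rewrite /pev fc0 mul0r ltxx.
Qed.

(* The coefficients [z] are the multipliers [mu] of [W_S]; for [#|S| = 1] they say that the
   reduced gradient vanishes, and for [#|S| > n] no condition is needed. *)
Lemma piW_of_dependent (S : {set 'I_m}) x (z : 'I_m -> R) i0 :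
  (forall i, i \in S -> pev (f i) x = 0) -> i0 \in S -> z i0 != 0 ->
  (forall k, k != ord0 -> \sum_(i in S) z i * pev (mpoly.mderiv k (f i)) x = 0) ->
  piW f S (realC x).
Proof.
move=> fS0 i0S zi0 zdep.
have cfS0 i : i \in S -> cev (realC x) (f i) = 0 by move=> iS; rewrite cev_realC fS0 ?rmorph0.
rewrite /piW; case: ifP => [/cards1P[a Sa] | S_ne1].
  move=> i; rewrite Sa inE => /eqP ->; have i0a : i0 = a by move: i0S; rewrite Sa inE => /eqP.
  split=> [|k k0]; first by apply: cfS0; rewrite Sa inE.
  have /eqP := zdep k k0; rewrite Sa big_set1 mulf_eq0 -i0a (negbTE zi0) /=.
  by rewrite cev_realC => /eqP ->; rewrite rmorph0.
case: ifP => [S_2n|S_n2]; last first.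
  case: ifP => [_|S_le]; first exact: cfS0.
  have : (0 < #|S|)%N by apply/card_gt0P; exists i0.
  by move: S_ne1 S_n2 S_le; case: #|S| => [|[|k]] //= _ /negbT/negP kn /negbT; rewrite -leqNgt.
split=> //; exists (fun i => real_complex R (z i)); split.
  by exists i0 => //; rewrite fmorph_eq0.
move=> k k0; rewrite -[RHS](rmorph0 (real_complex R)) -(zdep k k0) rmorph_sum.
by apply: eq_bigr => i _; rewrite rmorphM cev_realC.
Qed.

Lemma near_semialg_set x : exists2 eps, 0 < eps & forall c y, F c ->
  `|c - x| < eps -> `|y - x| < eps ->
  (forall i, i \in active_set x -> pev (f i) y = pev (f i) c) -> F y.
Proof.
have [eps eps_gt0 inactive_sign] : exists2 eps, 0 < eps & forall i, i \notin active_set x ->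
    forall y, `|y - x| < eps -> 0 < pev (f i) y * pev (f i) x.
  apply: ex_common_radius => [i r r' Pr r'0 r'r iA y yx|i].
    by apply: Pr => //; exact: lt_le_trans r'r.
  case: (boolP (i \in active_set x)) => iA; first by exists 1.
  have fx0 : pev (f i) x != 0 by rewrite inE in iA.
  by have [r r0 Pr] := pev_sign_near fx0; exists r => // _.
exists eps => // c y Fc cx yx active_eq i; change (sign_holds (sigma i) (pev (f i) y)).
case: (boolP (i \in active_set x)) => iA; first by rewrite active_eq //; exact: Fc.
rewrite (sign_holds_mul_gt0 _ (inactive_sign i iA _ yx)).
by rewrite -(sign_holds_mul_gt0 _ (inactive_sign i iA _ cx)); exact: Fc.
Qed.

Lemma component_escapes x0 x dir :
  closure (connected_component F x0) x ->
  constraint_mx (grads x) (active_set x) (reduced_mx (grads x) (active_set x))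
    \in unitmx ->
  `|dir| = 1 ->
  exists2 y, connected_component F x0 y & 0 < dir * (y ord0 ord0 - x ord0 ord0).
Proof.
move=> clx J_unit dir1; set C := connected_component F x0.
have [eps eps_gt0 F_near] := near_semialg_set x.
pose e1 : 'rV[R]_n.+1 := \row_k (k == ord0)%:R.
have [rho rho_gt0 [delta delta_gt0 path]] := constrained_path (dir *: e1) eps_gt0
  (fun i _ => strict_grad_pev x (f i)) J_unit.
have min_gt0 : 0 < Num.min rho (Num.min delta eps) by rewrite !lt_min rho_gt0 delta_gt0.
have [c Cc] := closure_near clx min_gt0.
rewrite !lt_min => /andP[cx_rho /andP[cx_delta cx_eps]].
have [gam gam0 [[L gam_lip] gamP]] := path c cx_rho.
have gamF : gam @` `[0, delta]%classic `<=` F.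
  move=> _ [t /= t_itv <-]; rewrite in_itv /= in t_itv.
  have [gam_eps gam_const _] := gamP t t_itv.
  exact: F_near (connected_component_sub Cc) cx_eps gam_eps gam_const.
have delta_itv : 0 <= delta <= delta by rewrite lexx ltW.
have C_gam : C (gam delta).
  apply: connected_component_trans Cc _; apply: (connected_component_max _ gamF).
  - by exists 0; rewrite ?gam0 //= in_itv /= lexx ltW.
  - apply: connected_continuous_connected; first exact: segment_connected.
    exact/continuous_subspaceT/(lipschitz_continuous gam_lip).
  - by exists delta; rewrite //= in_itv.
exists (gam delta) => //.
have [_ _ [u ->]] := gamP delta delta_itv.
rewrite mxE mulmx_reduced_mx eqxx addr0 !mxE eqxx mulr1.
have cx1 : `|c ord0 ord0 - x ord0 ord0| < delta.
  by apply: le_lt_trans cx_delta; have := ler_mxnorm_entry (c - x) ord0 ord0; rewrite !mxE.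
have dir2 : dir * dir = 1 by rewrite -expr2 -real_normK ?num_real // dir1 expr1n.
have -> : dir * (c ord0 ord0 + delta * dir - x ord0 ord0) =
    dir * (c ord0 ord0 - x ord0 ord0) + delta * (dir * dir) by ring.
have := ler_norm (- (dir * (c ord0 ord0 - x ord0 ord0))).
by rewrite normrN normrM dir1 mul1r dir2; lra.
Qed.
End SemialgebraicSet.

Theorem mainTheorem8 (R : realType) (n m : nat)
  (f : 'I_m -> mpoly.mpoly n.+1 R) (sigma : 'I_m -> sign_rel)
  (C : set 'rV[R]_n.+1) :
  is_connected_component (semialg_set f sigma) C ->
  Zset C `<=` [set x | exists S : {set 'I_m},
                  [/\ Eset sigma \subset S, S != finset.set0 & piW f S (realC x)]].
Proof.
move=> [x0 _ ->] x Zx; apply: contrapT => xNW.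
set A := active_set f x.
have clCx : closure (connected_component (semialg_set f sigma) x0) x.
  by case: Zx => -[_ []].
have EA : Eset sigma \subset A.
  apply: Eset_sub_active; apply: closure_subset clCx; exact: connected_component_sub.
have J_unit : constraint_mx (grads f x) A (reduced_mx (grads f x) A) \in unitmx.
  apply: unitmx_constraint_reduced => z zdep i0 i0A; apply: contrapT => /eqP zi0.
  apply: xNW; exists A; split => //; first by apply/set0Pn; exists i0.
  apply: (piW_of_dependent (z := z) _ i0A zi0) => [i|k k0]; first by rewrite inE => /eqP.
  by rewrite -[RHS](zdep k k0); apply: eq_bigr => i _; rewrite mxE.
case: Zx => [[lb [_ xinf]] | [ub [_ xsup]]].
  have [y Cy] := component_escapes (dir := -1) clCx J_unit (normrN1 _).
  by have := ge_inf lb (ex_intro2 _ _ y Cy erefl); rewrite -xinf /pi1; lra.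
have [y Cy] := component_escapes (dir := 1) clCx J_unit (normr1 _).
by have := ub_le_sup ub (ex_intro2 _ _ y Cy erefl); rewrite -xsup /pi1; lra.
Qed.
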